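(* Let $w=w_1\cdots w_n$ be a word of distinct positive integers avoiding $31245,32145,31254,32154$. Let $l_1<\dots<l_s$ be the positions of the left-to-right maxima of $w$ and $r_1<\dots<r_t$ the positions of the right-to-left maxima (so $l_1=1$, $l_s=r_1$ is the position of $\max(w)$, $r_t=n$). Assume $s>1$, $t>1$, $l_s>s$, and $w_{l_{s-1}}<w_{r_2}$. Then exactly one of the following holds: (I-1) $l_s=l_{s-1}+1$; (I-2) $l_s=l_{s-1}+2$ and $w_j<w_{l_{s-1}}$ for all $l_s<j<r_2$; (I-3) $l_s=l_{s-1}+2$ and there is an integer $k$ with $l_s<k<r_2$ such that $w_j>w_{l_{s-1}}$ for all $l_s<j\le k$ and $w_j<w_{l_{s-1}}$ for all $k<j<r_2$.
   Context: A word of distinct positive integers avoids a pattern $P$ (a permutation of $[m]$) if no subsequence of length $m$ is order-isomorphic to $P$. A left-to-right (resp. right-to-left) maximum of $w$ is a letter $w_i$ greater than all letters to its left (resp. right). *)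

From mathcomp Require Import all_boot.
Set Implicit Arguments. Unset Strict Implicit. Unset Printing Implicit Defensive.

(* Words are seq nat; positions are 1-based: letter (w `@ i) = w_i for 1 <= i <= size w. *)
Definition letter (w : seq nat) (i : nat) : nat := nth 0 w i.-1.
Notation "w `@ i" := (letter w i) (at level 10).

Definition distinct_pos_word (w : seq nat) : Prop := uniq w /\ all (fun x => 0 < x) w.

Definition order_iso (u P : seq nat) : Prop :=
  size u = size P /\
  forall i j, i < size u -> j < size u ->
    (nth 0 u i < nth 0 u j) = (nth 0 P i < nth 0 P j).

Definition avoids (w P : seq nat) : Prop :=
  forall u, subseq u w -> ~ order_iso u P.

Definition is_ltr_max (w : seq nat) (i : nat) : bool :=
  (1 <= i <= size w) && all (fun j => w `@ j < w `@ i) (iota 1 i.-1).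

Definition is_rtl_max (w : seq nat) (i : nat) : bool :=
  (1 <= i <= size w) && all (fun j => w `@ j < w `@ i) (iota i.+1 (size w - i)).

Definition ltr_pos (w : seq nat) : seq nat := [seq i <- iota 1 (size w) | is_ltr_max w i].
Definition rtl_pos (w : seq nat) : seq nat := [seq i <- iota 1 (size w) | is_rtl_max w i].

(* 1-based access: lpos w k = l_k, rpos w k = r_k *)
Definition lpos (w : seq nat) (k : nat) : nat := nth 0 (ltr_pos w) k.-1.
Definition rpos (w : seq nat) (k : nat) : nat := nth 0 (rtl_pos w) k.-1.

From mathcomp Require Import all_boot zify.

Set Implicit Arguments.
Unset Strict Implicit.
Unset Printing Implicit Defensive.

(* Write a = l_(s-1) and m = l_s. The letters strictly between positions a and m
   are smaller than w_a, while w_m and w_(r_2) are larger, and m <= r_1 < r_2.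
   If m >= a + 3, the letters at a, a+1, a+2, m, r_2 form one of the four
   forbidden patterns 3{12,21}{45,54}, so m = a + 1 or m = a + 2.  When m = a + 2
   the letter w_(a+1) < w_a plays the same role: a letter below w_a at some
   j in (m, r_2) cannot be followed, before r_2, by a letter above w_a at k, as
   a, a+1, j, k, r_2 would be forbidden.  Hence the letters above w_a in
   (m, r_2) form an initial segment, empty in case (I-2), nonempty in (I-3). *)

Lemma sorted_subset_subseq (T : eqType) (leT : rel T) (s t : seq T) :
  transitive leT -> irreflexive leT ->
  sorted leT s -> sorted leT t -> {subset s <= t} -> subseq s t.
Proof.
move=> leT_tr leT_irr s_sorted t_sorted sub_st.
have -> : s = [seq x <- t | x \in s].
  apply: (irr_sorted_eq leT_tr leT_irr s_sorted (sorted_filter leT_tr _ t_sorted)).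
  by move=> x; rewrite mem_filter; case: (boolP (x \in s)) => // /sub_st ->.
exact: filter_subseq.
Qed.

Lemma not_mem_between_nth (s : seq nat) k j :
  sorted ltn s -> k.+1 < size s -> nth 0 s k < j < nth 0 s k.+1 -> j \notin s.
Proof.
move=> s_sorted k_lt j_between; apply/negP => /(nthP 0)[i i_lt s_i].
move: s_sorted; rewrite ltn_sorted_uniq_leq => /andP[_ /(sorted_leq_nth leq_trans leqnn 0) mono].
have [ik | ki] := leqP i k.
- by have := mono i k; rewrite !inE s_i => /(_ i_lt _ ik); lia.
- by have := mono k.+1 i; rewrite !inE s_i => /(_ k_lt i_lt ki); lia.
Qed.

Lemma map_letter_iota (w : seq nat) : map (letter w) (iota 1 (size w)) = w.
Proof. by rewrite -[1]/(1 + 0) iotaDl -map_comp [LHS](mkseq_nth 0 w). Qed.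

Lemma map_letter_subseq (w ps : seq nat) :
  sorted ltn ps -> all (fun p => 0 < p <= size w) ps -> subseq (map (letter w) ps) w.
Proof.
move=> ps_sorted ps_range; rewrite -[X in subseq _ X]map_letter_iota; apply: map_subseq.
apply: (sorted_subset_subseq ltn_trans ltnn ps_sorted (iota_ltn_sorted _ _)).
by move=> p /(allP ps_range); rewrite mem_iota; lia.
Qed.

Lemma letter_inj (w : seq nat) i j : uniq w ->
  0 < i <= size w -> 0 < j <= size w -> w `@ i = w `@ j -> i = j.
Proof.
move=> w_uniq i_range j_range /eqP; have i_lt : i.-1 < size w by lia.
have j_lt : j.-1 < size w by lia.
by rewrite /letter nth_uniq // => /eqP; lia.
Qed.

Lemma letter_neq (w : seq nat) i j : uniq w ->
  0 < i <= size w -> 0 < j <= size w -> i != j -> w `@ i != w `@ j.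
Proof. by move=> w_uniq i_range j_range; apply: contra_neq; apply: letter_inj. Qed.

Section LeftRightMaxima.

Variable w : seq nat.

Lemma mem_ltr_pos i : (i \in ltr_pos w) = is_ltr_max w i.
Proof.
by rewrite mem_filter mem_iota andb_idr // => /andP[/andP[i_gt0 i_le] _]; lia.
Qed.

Lemma mem_rtl_pos i : (i \in rtl_pos w) = is_rtl_max w i.
Proof.
by rewrite mem_filter mem_iota andb_idr // => /andP[/andP[i_gt0 i_le] _]; lia.
Qed.

Lemma ltr_pos_sorted : sorted ltn (ltr_pos w).
Proof. exact/sorted_filter/iota_ltn_sorted/ltn_trans. Qed.

Lemma rtl_pos_sorted : sorted ltn (rtl_pos w).
Proof. exact/sorted_filter/iota_ltn_sorted/ltn_trans. Qed.

Lemma lpos_ltr_max k : 0 < k <= size (ltr_pos w) -> is_ltr_max w (lpos w k).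
Proof.
move=> k_range; have k_lt : k.-1 < size (ltr_pos w) by lia.
by rewrite -mem_ltr_pos mem_nth.
Qed.

Lemma rpos_rtl_max k : 0 < k <= size (rtl_pos w) -> is_rtl_max w (rpos w k).
Proof.
move=> k_range; have k_lt : k.-1 < size (rtl_pos w) by lia.
by rewrite -mem_rtl_pos mem_nth.
Qed.

Lemma lpos_lt k : 0 < k < size (ltr_pos w) -> lpos w k < lpos w k.+1.
Proof.
by move=> k_range; apply: (sorted_ltn_nth ltn_trans 0 ltr_pos_sorted); rewrite ?inE; lia.
Qed.

Lemma rpos_lt k : 0 < k < size (rtl_pos w) -> rpos w k < rpos w k.+1.
Proof.
by move=> k_range; apply: (sorted_ltn_nth ltn_trans 0 rtl_pos_sorted); rewrite ?inE; lia.
Qed.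

Lemma ltr_max_range i : is_ltr_max w i -> 0 < i <= size w.
Proof. by case/andP. Qed.

Lemma rtl_max_range i : is_rtl_max w i -> 0 < i <= size w.
Proof. by case/andP. Qed.

Lemma ltr_maxP i j : is_ltr_max w i -> 0 < j < i -> w `@ j < w `@ i.
Proof. by case/andP=> _ /allP i_max j_range; apply: i_max; rewrite mem_iota; lia. Qed.

Lemma rtl_maxP i j : is_rtl_max w i -> i < j <= size w -> w `@ j < w `@ i.
Proof. by case/andP=> _ /allP i_max j_range; apply: i_max; rewrite mem_iota; lia. Qed.

Lemma ltr_max_le_rtl_max i j : is_ltr_max w i -> is_rtl_max w j -> i <= j.
Proof.
move=> i_max j_max; rewrite leqNgt; apply/negP => j_lt_i.
have := @ltr_maxP i j i_max; have := @rtl_maxP j i j_max.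
have := ltr_max_range i_max; have := rtl_max_range j_max; lia.
Qed.

Lemma letter_le_after_ltr_max x y :
  is_ltr_max w x -> (forall j, x < j < y -> ~~ is_ltr_max w j) ->
  forall j, x < j < y -> w `@ j <= w `@ x.
Proof.
move=> x_max no_max j; elim/ltn_ind: j => j IH j_range.
have [j_le | j_gt] := leqP j (size w); last by rewrite /letter nth_default //; lia.
have := no_max j j_range; rewrite /is_ltr_max.
have -> /= : 1 <= j <= size w by lia.
rewrite -has_predC.
case/hasP=> i; rewrite mem_iota /= -leqNgt => i_range wj_le_wi.
have [i_lt_x | x_lt_i | <- //] := ltngtP i x.
- by have := @ltr_maxP x i x_max; lia.
- by have := IH i ltac:(lia) ltac:(lia); lia.
Qed.

Lemma letter_lt_between_lpos k j : uniq w -> 0 < k < size (ltr_pos w) ->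
  lpos w k < j < lpos w k.+1 -> w `@ j < w `@ (lpos w k).
Proof.
move=> w_uniq k_range j_range.
have x_max := lpos_ltr_max (k:=k) ltac:(lia).
have y_range := ltr_max_range (lpos_ltr_max (k:=k.+1) ltac:(lia)).
have no_max i : lpos w k < i < lpos w k.+1 -> ~~ is_ltr_max w i.
  rewrite -mem_ltr_pos /lpos /= => i_range.
  by apply: (@not_mem_between_nth _ k.-1 _ ltr_pos_sorted); rewrite ?prednK //; lia.
have := letter_le_after_ltr_max x_max no_max j_range; rewrite leq_eqVlt.
case/orP => [/eqP/(letter_inj w_uniq) | //].
by have := ltr_max_range x_max; lia.
Qed.

End LeftRightMaxima.

Section PatternAvoidance.

Variable w : seq nat.
Hypothesis w_uniq : uniq w.
Hypotheses (w_avoids_31245 : avoids w [:: 3; 1; 2; 4; 5])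
           (w_avoids_32145 : avoids w [:: 3; 2; 1; 4; 5])
           (w_avoids_31254 : avoids w [:: 3; 1; 2; 5; 4])
           (w_avoids_32154 : avoids w [:: 3; 2; 1; 5; 4]).

Lemma no_two_below_two_above a b c d e :
  0 < a < b -> b < c < d -> d < e <= size w ->
  w `@ b < w `@ a -> w `@ c < w `@ a -> w `@ a < w `@ d -> w `@ a < w `@ e -> False.
Proof.
move=> ab bc de ba ca ad ae.
have u_sub : subseq (map (letter w) [:: a; b; c; d; e]) w.
  by apply: map_letter_subseq => /=; lia.
have bc_neq : w `@ b != w `@ c by apply: (letter_neq w_uniq); lia.
have de_neq : w `@ d != w `@ e by apply: (letter_neq w_uniq); lia.
have not_iso P : avoids w P -> ~ order_iso (map (letter w) [:: a; b; c; d; e]) P.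
  by move=> P_avoided; apply: P_avoided u_sub.
have [b_lt_c | c_lt_b] : w `@ b < w `@ c \/ w `@ c < w `@ b by lia.
all: have [d_lt_e | e_lt_d] : w `@ d < w `@ e \/ w `@ e < w `@ d by lia.
all: [> apply: (not_iso _ w_avoids_31245) | apply: (not_iso _ w_avoids_31254)
      | apply: (not_iso _ w_avoids_32145) | apply: (not_iso _ w_avoids_32154)].
all: split => // i j i_lt j_lt.
all: by case: i i_lt => [|[|[|[|[|i]]]]] // _; case: j j_lt => [|[|[|[|[|j]]]]] // _ /=;
     case: ltnP; lia.
Qed.

(* In the application, a = l_(s-1), m = l_s and r = r_2. *)
Variables a m r : nat.
Hypotheses (a_gt0 : 0 < a) (a_lt_m : a < m) (m_lt_r : m < r) (r_le_size : r <= size w).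
Hypothesis below_a : forall j, a < j < m -> w `@ j < w `@ a.
Hypotheses (wa_lt_wm : w `@ a < w `@ m) (wa_lt_wr : w `@ a < w `@ r).

Lemma gap_le2 : m <= a.+2.
Proof.
rewrite leqNgt; apply/negP => gap_gt2.
by apply: (@no_two_below_two_above a a.+1 a.+2 m r); rewrite ?below_a //; lia.
Qed.

Lemma gap2_above_prefix : m = a.+2 ->
  (forall j, m < j < r -> w `@ j < w `@ a) \/
  exists k, [/\ m < k < r, (forall j, m < j <= k -> w `@ a < w `@ j) &
                           (forall j, k < j < r -> w `@ j < w `@ a)].
Proof.
move=> m_eq.
have neq_a j : m < j < r -> w `@ j != w `@ a by move=> j_range; apply: (letter_neq w_uniq); lia.
have [has_above | no_above] := boolP (has (fun j => w `@ a < w `@ j) (index_iota m.+1 r)).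
- right; have above_ex : exists j, (m < j < r) && (w `@ a < w `@ j).
    by case/hasP: has_above => j; rewrite mem_index_iota => j_range above; exists j; rewrite above; lia.
  have above_le_r j : (m < j < r) && (w `@ a < w `@ j) -> j <= r by case/andP; lia.
  have [k /andP[k_range wa_lt_wk] k_max] := ex_maxnP above_ex above_le_r.
  exists k; split => // j j_range.
  + have [j_lt_k | k_lt_j | -> //] := ltngtP j k; last by lia.
    have := neq_a j ltac:(lia); case: ltngtP => // wj_lt_wa _; exfalso.
    have wa1_lt_wa : w `@ a.+1 < w `@ a by apply: below_a; lia.
    by apply: (@no_two_below_two_above a a.+1 j k r); lia.
  + have := neq_a j ltac:(lia); case: ltngtP => // wa_lt_wj _.
    by have := k_max j; rewrite wa_lt_wj andbT; lia.
- left => j j_range; have := neq_a j j_range; case: ltngtP => // wa_lt_wj _.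
  by case/hasP: no_above; exists j; rewrite ?mem_index_iota //; lia.
Qed.

End PatternAvoidance.

Theorem lemma3p1 (w : seq nat) :
  distinct_pos_word w ->
  avoids w [:: 3; 1; 2; 4; 5] -> avoids w [:: 3; 2; 1; 4; 5] ->
  avoids w [:: 3; 1; 2; 5; 4] -> avoids w [:: 3; 2; 1; 5; 4] ->
  let s := size (ltr_pos w) in
  let t := size (rtl_pos w) in
  let ls := lpos w s in
  let ls1 := lpos w s.-1 in
  let r2 := rpos w 2 in
  let I1 := ls = ls1 + 1 in
  let I2 := ls = ls1 + 2 /\ (forall j, ls < j < r2 -> w `@ j < w `@ ls1) in
  let I3 := ls = ls1 + 2 /\
            (exists k, [/\ ls < k < r2,
                           (forall j, ls < j <= k -> w `@ ls1 < w `@ j) &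
                           (forall j, k < j < r2 -> w `@ j < w `@ ls1)]) in
  1 < s -> 1 < t -> s < ls -> w `@ ls1 < w `@ r2 ->
  [/\ I1, ~ I2 & ~ I3] \/ [/\ ~ I1, I2 & ~ I3] \/ [/\ ~ I1, ~ I2 & I3].
Proof.
move=> [w_uniq _] av1 av2 av3 av4 s t ls ls1 r2 I1 I2 I3 s_gt1 t_gt1 _ wls1_lt_wr2.
have s_def : s = size (ltr_pos w) := erefl.
have t_def : t = size (rtl_pos w) := erefl.
have s_eq : s = s.-1.+1 by lia.
have ls_max : is_ltr_max w ls by apply: lpos_ltr_max; lia.
have ls1_max : is_ltr_max w ls1 by apply: lpos_ltr_max; lia.
have r1_max : is_rtl_max w (rpos w 1) by apply: rpos_rtl_max; lia.
have r2_max : is_rtl_max w r2 by apply: rpos_rtl_max; lia.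
have [ls1_gt0 _] := andP (ltr_max_range ls1_max).
have [_ r2_le_size] := andP (rtl_max_range r2_max).
have ls1_lt_ls : ls1 < ls by rewrite /ls s_eq; apply: lpos_lt; lia.
have below_ls1 j : ls1 < j < ls -> w `@ j < w `@ ls1.
  by rewrite /ls s_eq => j_range; apply: letter_lt_between_lpos => //; lia.
have ls_lt_r2 : ls < r2 by apply: leq_ltn_trans (ltr_max_le_rtl_max ls_max r1_max) (rpos_lt _); lia.
have wls1_lt_wls : w `@ ls1 < w `@ ls by apply: ltr_maxP; lia.
have ls_le := gap_le2 w_uniq av1 av2 av3 av4 ls1_gt0 ls1_lt_ls ls_lt_r2 r2_le_size below_ls1
  wls1_lt_wls wls1_lt_wr2.
have not_I2_I3 : I2 -> ~ I3.
  by move=> [_ below] [_ [k [k_range above _]]]; have := below k; have := above k; lia.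
have [ls_eq1 | ls_eq2] : ls = ls1 + 1 \/ ls = ls1 + 2 by lia.
  by left; split; rewrite /I1 //; case; lia.
have not_I1 : ~ I1 by rewrite /I1; lia.
have [below_ls | above_below] := gap2_above_prefix w_uniq av1 av2 av3 av4 ls1_gt0 ls1_lt_ls ls_lt_r2
  r2_le_size below_ls1 wls1_lt_wls wls1_lt_wr2 ltac:(lia).
  have I2_holds : I2 by split.
  by right; left; split => // /(not_I2_I3 I2_holds).
have I3_holds : I3 by split.
by right; right; split => // /not_I2_I3.
Qed.
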